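(* In the setting below, for every $n\in\mathbb{N}_0$ there exists a constant $C_{2n}\in(0,1)$, independent of $N$, such that $d(t_{2n+1})\le C_{2n}\,d(t_{2n})$.
   Context: Setting: $N\ge2$; $\psi:\mathbb{R}^d\times\mathbb{R}^d\to\mathbb{R}$ positive, bounded, continuous, $K:=\|\psi\|_\infty$; $\{t_n\}_{n\in\mathbb{N}_0}$ increasing, nonnegative, $t_0=0$, $t_n\to\infty$; $\alpha(0)=1$, $\alpha=1$ on $(t_{2n},t_{2n+1})$, $\alpha=-1$ on $[t_{2n+1},t_{2n+2}]$; $\{x_i\}$ solves $x_i'(t)=\frac1{N-1}\sum_{j\ne i}\alpha(t)\psi(x_i(t),x_j(t))(x_j(t)-x_i(t))$, $t>0$, $x_i(0)=x_i^0\in\mathbb{R}^d$ (continuous, $C^1$ on each $(t_n,t_{n+1})$). $d(t):=\max_{i,j}|x_i(t)-x_j(t)|$. Standing assumptions: $t_{2n+2}-t_{2n+1}<\frac{\ln 2}{K}$ for all $n$; $\sum_{p\ge0}\ln\frac{e^{K(t_{2p+2}-t_{2p+1})}}{2-e^{K(t_{2p+2}-t_{2p+1})}}<\infty$; $\sum_{p\ge0}\ln\max\{1-e^{-K(t_{2p+1}-t_{2p})},1-\frac{\psi_0}{K}(1-e^{-K(t_{2p+1}-t_{2p})})\}=-\infty$, with $\psi_0=\min_{|y|,|z|\le M^0}\psi(y,z)$, $M^0=e^{K\sum_{p}(t_{2p+2}-t_{2p+1})}\max_i|x_i^0|$. *)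

From HB Require Import structures.
From mathcomp Require Import all_boot all_order all_algebra.
From mathcomp Require Import all_classical all_reals all_analysis.
Set Implicit Arguments. Unset Strict Implicit. Unset Printing Implicit Defensive.
Import Order.TTheory GRing.Theory Num.Theory.
Import numFieldNormedType.Exports.
Local Open Scope classical_set_scope.
Local Open Scope ring_scope.

Section Defs.
Variables (R : realType) (dim : nat).

Definition enorm (v : 'rV[R]_dim) : R := Num.sqrt (\sum_(k < dim) v ord0 k ^+ 2).

(* K := ||psi||_oo (psi is positive, so this is the sup of its range) *)
Definition supK (psi : 'rV[R]_dim -> 'rV[R]_dim -> R) : R :=
  sup (range (fun p : 'rV[R]_dim * 'rV[R]_dim => psi p.1 p.2)).

Definition alpha (tt : nat -> R) (t : R) : R :=
  if pselect (exists n, tt n.*2.+1 <= t <= tt n.*2.+2) then -1 else 1.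

Definition negtau (tt : nat -> R) (p : nat) : R := tt p.*2.+2 - tt p.*2.+1.
Definition postau (tt : nat -> R) (p : nat) : R := tt p.*2.+1 - tt p.*2.

Definition rhs (psi : 'rV[R]_dim -> 'rV[R]_dim -> R) (tt : nat -> R) (N : nat)
  (x : 'I_N -> R -> 'rV[R]_dim) (i : 'I_N) (t : R) : 'rV[R]_dim :=
  (N.-1%:R)^-1 *: \sum_(j < N | j != i)
     (alpha tt t * psi (x i t) (x j t)) *: (x j t - x i t).

Definition is_solution (psi : 'rV[R]_dim -> 'rV[R]_dim -> R) (tt : nat -> R)
  (N : nat) (x : 'I_N -> R -> 'rV[R]_dim) : Prop :=
  forall i, {within `[0, +oo[, continuous (x i)} /\
    forall m t, tt m < t < tt m.+1 -> is_derive t 1 (x i) (rhs psi tt x i t).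

Definition diam (N : nat) (x : 'I_N -> R -> 'rV[R]_dim) (t : R) : R :=
  \big[Num.max/0]_(i < N) \big[Num.max/0]_(j < N) enorm (x i t - x j t).

Definition M0 (psi : 'rV[R]_dim -> 'rV[R]_dim -> R) (tt : nat -> R) (N : nat)
  (x0 : 'I_N -> 'rV[R]_dim) : R :=
  expR (supK psi * limn (series (negtau tt))) *
  \big[Num.max/0]_(i < N) enorm (x0 i).

Definition psi0 (psi : 'rV[R]_dim -> 'rV[R]_dim -> R) (M : R) : R :=
  inf [set r | exists y z, enorm y <= M /\ enorm z <= M /\ r = psi y z].

End Defs.

From HB Require Import structures.
From mathcomp Require Import all_boot all_order all_algebra.
From mathcomp Require Import all_classical all_reals all_analysis.
From mathcomp Require Import ring lra.
Import Order.TTheory GRing.Theory Num.Theory.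
Import numFieldNormedType.Exports.
Local Open Scope classical_set_scope.
Local Open Scope ring_scope.

(* On a positive phase [t_{2n}, t_{2n+1}] all agents attract each other.
   The squared norm of an agent of maximal norm grows at most like e^{4 c t},
   c a bound of psi, so up to time t_{2n+1} every agent stays in a ball whose
   radius depends only on R0, c and t_{2n+1}; on that ball psi >= p > 0 by
   compactness.  If (i, j) realises the diameter, every agent lies in the slab
   between x_i and x_j orthogonal to x_i - x_j, which forces
   d/dt |x_i - x_j|^2 <= -2 p |x_i - x_j|^2.  A maximum principle for finite
   families of functions turns both differential inequalities into Gronwall
   bounds, and C = e^{-p (t_{2n+1} - t_{2n})} works for every N. *)

Section MaximumPrinciple.
Context {R : realType}.

Lemma is_derive_lt0_left {f : R -> R} {s d a : R} :
  is_derive s 1 f d -> d < 0 -> a < s -> exists2 r, a < r < s & f s < f r.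
Proof.
move=> [df <-] d_lt0 as_.
have quot_cvg : (fun h : R => h^-1 *: ((f \o shift s) (h *: 1) - f s)) @ 0^' --> 'D_1 f s.
  exact: df.
have := cvgr_lt _ quot_cvg 0 d_lt0.
rewrite near_withinE /= => /(_ (Proper_dnbhs_numFieldType _)) /nbhs_ballP[e /= e0 He].
pose h := - Num.min (e / 2) ((s - a) / 2).
have h_lt0 : h < 0 by rewrite oppr_lt0 lt_min !divr_gt0 // subr_gt0.
have h_ge : - h <= e / 2 /\ - h <= (s - a) / 2.
  by rewrite opprK; split; rewrite ge_min lexx ?orbT.
have : ball 0 e h.
  by rewrite /ball /= sub0r normrN ltr0_norm //; lra.
move=> /He /(_ (ltr0_neq0 h_lt0)) /=; rewrite [_%:A]mulr1 => quot_lt0.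
exists (h + s); first by apply/andP; split; lra.
rewrite -subr_gt0 -[f _ - _](mulVKf (ltr0_neq0 h_lt0)).
by rewrite nmulr_rgt0.
Qed.

Definition maximal_at {I : finType} (f : I -> R -> R) (k : I) (t : R) :=
  forall l, f l t <= f k t.

Lemma max_principle_strict {I : finType} (f df : I -> R -> R) {a b M : R} :
  a < b ->
  (forall k, {within `[a, b], continuous (f k)}) ->
  (forall k t, a < t < b -> is_derive t 1 (f k) (df k t)) ->
  (forall k t, a < t < b -> maximal_at f k t -> df k t < 0) ->
  (forall k, f k a <= M) ->
  forall k t, a <= t <= b -> f k t <= M.
Proof.
move=> ab f_cont f_der df_neg fa.
have before_b (k : I) t : a <= t < b -> f k t <= M.
  move=> /andP[at_ tb].
  have sub_ab : `[a, t] `<=` `[a, b].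
    by move=> r /=; rewrite !in_itv /= => /andP[-> rt]; rewrite (le_trans rt (ltW tb)).
  have [s s_in s_max] : exists2 s : I -> R, forall l, s l \in `[a, t] &
      forall l r, r \in `[a, t] -> f l r <= f l (s l).
    have /choice[s sP] l : exists s, s \in `[a, t] /\
        forall r, r \in `[a, t] -> f l r <= f l s.
      have [s ? ?] := EVT_max at_ (continuous_subspaceW sub_ab (f_cont l)).
      by exists s.
    by exists s => l; have [] := sP l.
  (* a maximiser over [I * [a, t]] cannot be interior: there the derivative is negative *)
  case: (@arg_maxP _ _ I k xpredT (fun l => f l (s l)) isT) => k0 _ k0_max.
  have below_max l r : r \in `[a, t] -> f l r <= f k0 (s k0).
    by move=> rin; apply: le_trans (s_max l r rin) (k0_max l _).
  have := s_in k0; rewrite in_itv /= => /andP[as0 s0t].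
  have [s0a|s0_ne] := eqVneq a (s k0).
    by apply: le_trans (below_max k t _) _; rewrite ?in_itv /= ?at_ ?lexx // -s0a.
  have as0' : a < s k0 by rewrite lt_neqAle s0_ne.
  have s0_in : a < s k0 < b by rewrite as0' (le_lt_trans s0t tb).
  have d_lt0 : df k0 (s k0) < 0.
    by apply: df_neg => // l; apply: below_max; apply: s_in.
  have [r /andP[ar rs] fr] := is_derive_lt0_left (f_der k0 _ s0_in) d_lt0 as0'.
  have r_in : r \in `[a, t] by rewrite in_itv /= !ltW // (lt_le_trans rs s0t).
  by have := below_max k0 r r_in; rewrite leNgt fr.
move=> k t /andP[at_ tb].
have [tb'|bt] := ltrP t b; first by apply: before_b; rewrite at_ tb'.
have -> : t = b by apply/eqP; rewrite eq_le tb bt.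
have [_ _ left_cvg] := (continuous_within_itvP (f k) ab).1 (f_cont k).
rewrite -(cvg_lim _ left_cvg) //; apply: limr_le; first by apply/cvg_ex; exists (f k b).
near=> r; apply: before_b; apply/andP; split.
  by near: r; apply: nbhs_left_ge.
by near: r; exact: nbhs_left_lt.
Unshelve. all: by end_near.
Qed.

Lemma max_principle {I : finType} (f df : I -> R -> R) {a b M : R} :
  a < b ->
  (forall k, {within `[a, b], continuous (f k)}) ->
  (forall k t, a < t < b -> is_derive t 1 (f k) (df k t)) ->
  (forall k t, a < t < b -> maximal_at f k t -> df k t <= 0) ->
  (forall k, f k a <= M) ->
  forall k t, a <= t <= b -> f k t <= M.
Proof.
move=> ab f_cont f_der df_le0 fa k t tab.
apply/ler_addgt0Pr => e e0.
(* perturbing by [- d * t] makes the derivative negative at a maximum *)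
pose d := e / (b - a).
have d0 : 0 < d by rewrite divr_gt0 // subr_gt0.
have lin_cont : continuous (fun s : R => d * s).
  by move=> s; apply: cvgM; [exact: cvg_cst | exact: cvg_id].
have g_le : forall k t, a <= t <= b -> f k t - d * t <= M - d * a.
  apply: (max_principle_strict _ (fun l s => df l s - d)) => //.
  - by move=> l x; apply: cvgB; [exact: f_cont | exact: continuous_subspaceT].
  - move=> l s hs; apply: is_derive_eq.
      exact: is_deriveB (f_der l s hs) (is_deriveZ d (is_derive_id s 1)).
    by rewrite [_ *: _]mulr1.
  - move=> l s hs g_max; suff : df l s <= 0 by lra.
    by apply: df_le0 => // l'; have := g_max l'; lra.
  - by move=> l; have := fa l; lra.
have : d * (t - a) <= e.
  rewrite -[leRHS](@divfK _ (b - a)) ?subr_eq0 ?gt_eqF ?subr_gt0 // -/d.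
  by rewrite ler_pM2l //; lra.
have := g_le k t tab; lra.
Qed.

Lemma max_principle_gronwall {I : finType} (f df : I -> R -> R) {a b c M : R} :
  a < b ->
  (forall k, {within `[a, b], continuous (f k)}) ->
  (forall k t, a < t < b -> is_derive t 1 (f k) (df k t)) ->
  (forall k t, a < t < b -> maximal_at f k t -> df k t <= c * f k t) ->
  (forall k, f k a <= M) ->
  forall k t, a <= t <= b -> f k t <= M * expR (c * (t - a)).
Proof.
move=> ab f_cont f_der df_le fa k t tab.
(* integrating factor: [f l s * E s] satisfies the hypotheses of [max_principle] *)
pose E s := expR (- (c * s)).
have E_gt0 (s : R) : 0 < E s by exact: expR_gt0.
have E_cont : continuous E.
  move=> s; apply: continuous_comp; last exact: continuous_expR.
  by apply: cvgN; apply: cvgM; [exact: cvg_cst | exact: cvg_id].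
have E_der (s : R) : is_derive s 1 E (- c * E s).
  have inner : is_derive s 1 (fun s => - (c * s)) (- c).
    by apply: is_derive_eq; rewrite [_ *: _]mulr1.
  have := @is_derive1_comp _ expR (fun s => - (c * s)) s _ _ (is_derive_expR _) inner.
  by rewrite mulrC.
have h_le : forall k t, a <= t <= b -> f k t * E t <= M * E a.
  apply: (max_principle _ (fun l s => (df l s - c * f l s) * E s)) => //.
  - by move=> l x; apply: cvgM; [exact: f_cont | exact: continuous_subspaceT].
  - move=> l s hs; apply: is_derive_eq; first exact: is_deriveM (f_der l s hs) (E_der s).
    rewrite /GRing.scale /=; ring.
  - move=> l s hs h_max; rewrite pmulr_lle0 // subr_le0.
    by apply: df_le => // l'; rewrite -(ler_pM2r (E_gt0 s)).
  - by move=> l; rewrite ler_pM2r.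
have := h_le k t tab.
rewrite -ler_pdivlMr // => /le_trans; apply.
rewrite -mulrA /E -expRB (_ : _ - _ = c * (t - a)) //; ring.
Qed.

End MaximumPrinciple.

Lemma is_derive_mx_entry (R : realType) (m n : nat) (X : R -> 'M[R]_(m, n))
    (t : R) (dX : 'M[R]_(m, n)) i j :
  is_derive t 1 X dX -> is_derive t 1 (fun s => X s i j) (dX i j).
Proof.
move=> [dX1 <-]; have := (derivable_mxP X t 1).1 dX1 i j => dXij.
by apply: DeriveDef => //; rewrite derive_mx // mxE.
Qed.

Section Dot.
Context {R : realType} {dim : nat}.
Implicit Types u v w : 'rV[R]_dim.

Definition dot u v : R := \sum_(k < dim) u ord0 k * v ord0 k.
Definition sqnorm v := dot v v.

Lemma dotBr u v w : dot u (v - w) = dot u v - dot u w.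
Proof. by rewrite /dot -sumrB; apply: eq_bigr => k _; rewrite !mxE mulrBr. Qed.

Lemma dotZr u a v : dot u (a *: v) = a * dot u v.
Proof. by rewrite /dot mulr_sumr; apply: eq_bigr => k _; rewrite mxE mulrCA. Qed.

Lemma dot0r u : dot u 0 = 0.
Proof. by rewrite /dot big1 // => k _; rewrite mxE mulr0. Qed.

Lemma dot_sumr (I : finType) (P : pred I) u (F : I -> 'rV[R]_dim) :
  dot u (\sum_(i | P i) F i) = \sum_(i | P i) dot u (F i).
Proof.
by rewrite /dot exchange_big; apply: eq_bigr => k _; rewrite summxE mulr_sumr.
Qed.

Lemma sqnorm_ge0 v : 0 <= sqnorm v.
Proof. by apply: sumr_ge0 => k _; rewrite -expr2 sqr_ge0. Qed.

Lemma dot_le_sqnormD u v : 2 * dot u v <= sqnorm u + sqnorm v.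
Proof.
rewrite /sqnorm /dot mulr_sumr -big_split /=; apply: ler_sum => k _.
by have := sqr_ge0 (u ord0 k - v ord0 k); rewrite expr2; nra.
Qed.

Lemma dot_ge_sqnormD u v : - (sqnorm u + sqnorm v) <= 2 * dot u v.
Proof.
rewrite /sqnorm /dot mulr_sumr -big_split /= -sumrN; apply: ler_sum => k _.
by have := sqr_ge0 (u ord0 k + v ord0 k); rewrite expr2; nra.
Qed.

Lemma enormE v : enorm v = Num.sqrt (sqnorm v).
Proof. by rewrite /enorm /sqnorm /dot; under eq_bigr do rewrite expr2. Qed.

Lemma enorm_ge0 v : 0 <= enorm v.
Proof. exact: sqrtr_ge0. Qed.

Lemma enorm_le_sqnorm v c : 0 <= c -> (enorm v <= c) = (sqnorm v <= c ^+ 2).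
Proof.
by move=> c0; rewrite enormE -[sqnorm v <= _]ler_sqrt ?sqr_ge0 // sqrtr_sqr ger0_norm.
Qed.

Lemma coord_le_enorm v k : `|v ord0 k| <= enorm v.
Proof.
rewrite enormE -sqrtr_sqr ler_sqrt ?sqnorm_ge0 // /sqnorm /dot (bigD1 k) //=.
by rewrite expr2 lerDl; apply: sumr_ge0 => j _; rewrite -expr2 sqr_ge0.
Qed.

Lemma is_derive_sqnorm (X : R -> 'rV[R]_dim) (t : R) dX :
  is_derive t 1 X dX -> is_derive t 1 (fun s => sqnorm (X s)) (2 * dot (X t) dX).
Proof.
move=> X_der.
have -> : (fun s => sqnorm (X s)) = \sum_(k < dim) (fun s => X s ord0 k * X s ord0 k).
  by rewrite fct_sumE.
apply: is_derive_eq.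
  apply: is_derive_sum => k.
  by apply: is_deriveM; exact: is_derive_mx_entry.
by rewrite mulr_sumr; apply: eq_bigr => k _; rewrite /GRing.scale /=; ring.
Qed.

Lemma sqnorm_continuous_within (A : set R) (X : R -> 'rV[R]_dim) :
  {within A, continuous X} -> {within A, continuous (fun s => sqnorm (X s))}.
Proof.
move=> X_cont s; apply: (cvg_big add_continuous) => k _.
by apply: cvgM; exact: (continuous_cvg _ (@coord_continuous _ 1 dim ord0 k _) (X_cont s)).
Qed.

End Dot.

Section ConsensusField.
Context {R : realType} {dim N : nat}.
Hypothesis N_gt1 : (1 < N)%N.
Implicit Types (w : 'I_N -> 'I_N -> R) (y : 'I_N -> 'rV[R]_dim).

(* [rhs psi tt x i t] unfolds to [consensus_field] with the weights
   [fun i j => alpha tt t * psi (x i t) (x j t)] and positions [x ^~ t]. *)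
Definition consensus_field w y (i : 'I_N) : 'rV[R]_dim :=
  (N.-1%:R)^-1 *: \sum_(j < N | j != i) w i j *: (y j - y i).

Let Nm1_gt0 : 0 < N.-1%:R :> R.
Proof. by rewrite ltr0n -ltnS prednK // ltnW. Qed.

Lemma mean_others_le (i : 'I_N) (u : 'I_N -> R) (c : R) :
  (forall j, j != i -> u j <= c) -> (N.-1%:R)^-1 * \sum_(j < N | j != i) u j <= c.
Proof.
move=> u_le; rewrite ler_pdivrMl // mulrC.
have -> : c * N.-1%:R = \sum_(j < N | j != i) c.
  by rewrite (@sumr_const _ _ (predC1 i)) cardC1 card_ord mulr_natr.
exact: ler_sum.
Qed.

Lemma consensus_field_growth w y i (c : R) :
  (forall j, `|w i j| <= c) -> (forall j, sqnorm (y j) <= sqnorm (y i)) ->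
  2 * dot (y i) (consensus_field w y i) <= 4 * c * sqnorm (y i).
Proof.
move=> w_le y_max.
suff : (N.-1%:R)^-1 * \sum_(j < N | j != i) dot (y i) (w i j *: (y j - y i))
    <= 2 * c * sqnorm (y i) by rewrite dotZr dot_sumr; lra.
apply: mean_others_le => j _; rewrite dotZr dotBr.
have := dot_le_sqnormD (y i) (y j); have := dot_ge_sqnormD (y i) (y j).
have := y_max j; have := sqnorm_ge0 (y j); have := w_le j.
have c0 : 0 <= c := le_trans (normr_ge0 _) (w_le j).
rewrite ler_norml => /andP[? ?]; rewrite /sqnorm; nra.
Qed.

Lemma consensus_field_contract w y i j (p : R) :
  0 <= p -> (forall k, p <= w i k) -> (forall k, p <= w j k) ->
  (forall k l, sqnorm (y k - y l) <= sqnorm (y i - y j)) ->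
  2 * dot (y i - y j) (consensus_field w y i - consensus_field w y j)
    <= - (2 * p) * sqnorm (y i - y j).
Proof.
move=> p0 wi_ge wj_ge y_max; set V := y i - y j.
(* as (i, j) realises the diameter, every y k lies in the slab between y i and y j *)
have slab_i k : dot V (y k - y i) <= 0.
  have -> : y k - y i = (y k - y j) - V by rewrite /V opprB addrA subrK.
  rewrite dotBr -/(sqnorm V).
  by have := dot_le_sqnormD V (y k - y j); have := y_max k j; lra.
have slab_j k : 0 <= dot V (y k - y j).
  have -> : y k - y j = V - (y i - y k) by rewrite /V opprB [RHS]addrC addrA subrK.
  rewrite dotBr -/(sqnorm V).
  by have := dot_le_sqnormD V (y i - y k); have := y_max i k; lra.
have sum_i : \sum_(k < N | k != i) w i k * dot V (y k - y i)
    <= \sum_(k < N) p * dot V (y k - y i).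
  rewrite [leRHS](bigD1 i) //= subrr dot0r mulr0 add0r; apply: ler_sum => k _.
  by rewrite -subr_ge0 -mulrBl mulr_le0 ?slab_i // subr_le0.
have sum_j : \sum_(k < N) p * dot V (y k - y j)
    <= \sum_(k < N | k != j) w j k * dot V (y k - y j).
  rewrite [leLHS](bigD1 j) //= subrr dot0r mulr0 add0r; apply: ler_sum => k _.
  by rewrite -subr_ge0 -mulrBl mulr_ge0 ?slab_j // subr_ge0.
have sum_ij : \sum_(k < N) p * dot V (y k - y i) - \sum_(k < N) p * dot V (y k - y j)
    = - (p * sqnorm V) * N%:R.
  rewrite -sumrB (eq_bigr (fun=> - (p * sqnorm V))) => [|k _].
    by rewrite sumr_const card_ord mulr_natr.
  by rewrite /sqnorm /V !dotBr; ring.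
have N_eq : N%:R = N.-1%:R + 1 :> R by rewrite natr1 prednK // ltnW.
have pV0 : 0 <= p * sqnorm V by rewrite mulr_ge0 ?sqnorm_ge0.
rewrite dotBr !dotZr !dot_sumr.
under eq_bigr do rewrite dotZr.
under [X in _ - _ * X]eq_bigr do rewrite dotZr.
rewrite -mulrBr; set S := (_ - _).
suff : N.-1%:R^-1 * S <= - (p * sqnorm V) by lra.
rewrite ler_pdivrMl // /S; rewrite N_eq in sum_ij; nra.
Qed.

End ConsensusField.

Lemma enorm_le_diam (R : realType) (dim N : nat) (x : 'I_N -> R -> 'rV[R]_dim) t i j :
  enorm (x i t - x j t) <= diam x t.
Proof.
apply: le_trans (le_bigmax _ (fun i => \big[Num.max/0]_(j < N) enorm (x i t - x j t)) i).
exact: le_bigmax (fun j => enorm (x i t - x j t)) j.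
Qed.

Lemma diam_ge0 (R : realType) (dim N : nat) (x : 'I_N -> R -> 'rV[R]_dim) t :
  0 <= diam x t.
Proof. exact: bigmax_ge_id. Qed.

Lemma diam_le (R : realType) (dim N : nat) (x : 'I_N -> R -> 'rV[R]_dim) t (c : R) :
  0 <= c -> (forall i j, enorm (x i t - x j t) <= c) -> diam x t <= c.
Proof. by move=> c0 x_le; do 2 apply: bigmax_le => // ? _. Qed.

Lemma pos_continuous_ball_lower_bound {R : realType} {dim : nat}
    {psi : 'rV[R]_dim -> 'rV[R]_dim -> R} (r : R) :
  (forall y z, 0 < psi y z) ->
  continuous (fun q : 'rV[R]_dim * 'rV[R]_dim => psi q.1 q.2) ->
  exists2 p, 0 < p & forall y z, enorm y <= r -> enorm z <= r -> p <= psi y z.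
Proof.
move=> psi_pos psi_cont.
pose box := [set v : 'rV[R]_dim | forall k, `[- `|r|, `|r|]%classic (v ord0 k)].
have box_compact : compact box.
  by apply: (@rV_compact _ _ (fun=> `[- `|r|, `|r|]%classic)) => _; exact: segment_compact.
have box2_nonempty : (box `*` box) !=set0.
  by exists (0, 0); split => k /=; rewrite mxE in_itv /= oppr_le0 normr_ge0.
have [q _ q_min] := compact_EVT_min box2_nonempty (compact_setX box_compact box_compact)
  (continuous_subspaceT psi_cont).
exists (psi q.1 q.2) => // y z y_le z_le.
have in_box v : enorm v <= r -> box v.
  move=> v_le k /=; rewrite in_itv /= -ler_norml.
  exact: le_trans (coord_le_enorm v k) (le_trans v_le (ler_norm r)).
by apply: (q_min (y, z)); rewrite inE; split; apply: in_box.
Qed.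

Lemma normr_alpha (R : realType) (tt : nat -> R) t : `|alpha tt t| = 1.
Proof. by rewrite /alpha; case: pselect => _ /=; rewrite ?normrN normr1. Qed.

Lemma alpha_pos_phase {R : realType} {tt : nat -> R} {n : nat} {t : R} :
  (forall m, tt m < tt m.+1) -> tt n.*2 < t < tt n.*2.+1 -> alpha tt t = 1.
Proof.
move=> tt_incr /andP[t_gt t_lt]; rewrite /alpha.
case: pselect => /= [[m /andP[m_le m_ge]]|//].
have tt_le := homo_leq (@lexx _ R) le_trans (fun m => ltW (tt_incr m)).
have [mn|nm] := ltnP m n.
  have : tt m.*2.+2 <= tt n.*2 by apply: tt_le; rewrite -doubleS leq_double.
  by move=> /(le_trans m_ge); rewrite leNgt t_gt.
have : tt n.*2.+1 <= tt m.*2.+1 by apply: tt_le; rewrite ltnS leq_double.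
by move=> /(lt_le_trans t_lt); rewrite ltNge m_le.
Qed.

Section Solution.
Context {R : realType} {dim : nat} {psi : 'rV[R]_dim -> 'rV[R]_dim -> R}.
Context {tt : nat -> R} {N : nat} {x : 'I_N -> R -> 'rV[R]_dim}.
Hypotheses (N_gt1 : (1 < N)%N) (tt0 : tt 0%N = 0) (tt_incr : forall m, tt m < tt m.+1).
Hypothesis x_sol : is_solution psi tt x.

Lemma solution_continuous_within m i : {within `[tt m, tt m.+1], continuous (x i)}.
Proof.
apply: continuous_subspaceW (x_sol i).1 => s /=; rewrite !in_itv /= andbT => /andP[+ _].
apply: le_trans; rewrite -tt0.
exact: homo_leq (@lexx _ R) le_trans (fun m => ltW (tt_incr m)) _ _ (leq0n m).
Qed.

Lemma solution_sqnorm_le (c B : R) :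
  (forall y z, 0 < psi y z) -> (forall y z, psi y z <= c) ->
  (forall i, sqnorm (x i 0) <= B) ->
  forall m i t, tt m <= t <= tt m.+1 -> sqnorm (x i t) <= B * expR (4 * c * t).
Proof.
move=> psi_pos psi_le x0_le.
have on_phase m : (forall i, sqnorm (x i (tt m)) <= B * expR (4 * c * tt m)) ->
    forall i t, tt m <= t <= tt m.+1 -> sqnorm (x i t) <= B * expR (4 * c * t).
  move=> xm_le i t tm_le.
  have := max_principle_gronwall (c := 4 * c) (fun i s => sqnorm (x i s))
    (fun i s => 2 * dot (x i s) (rhs psi tt x i s)) (tt_incr m) _ _ _ xm_le i t tm_le.
  rewrite -mulrA -expRD (_ : _ + _ = 4 * c * t); last by ring.
  apply.
  - by move=> k; apply: sqnorm_continuous_within; exact: solution_continuous_within.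
  - by move=> k s ms; apply: is_derive_sqnorm; exact: (x_sol k).2 m s ms.
  - move=> k s _ k_max.
    apply: (consensus_field_growth N_gt1 (fun i j => alpha tt s * psi (x i s) (x j s)))
      => // j.
    by rewrite normrM normr_alpha mul1r gtr0_norm.
elim=> [|m IHm]; apply: on_phase => i.
  by rewrite tt0 mulr0 expR0 mulr1.
by apply: IHm; rewrite lexx ltW.
Qed.

Lemma solution_diam_contract n (p : R) :
  0 <= p ->
  (forall i k t, tt n.*2 <= t <= tt n.*2.+1 -> p <= psi (x i t) (x k t)) ->
  forall i j t, tt n.*2 <= t <= tt n.*2.+1 ->
  sqnorm (x i t - x j t) <= diam x (tt n.*2) ^+ 2 * expR (- (2 * p) * (t - tt n.*2)).
Proof.
move=> p0 p_le i j t t_in.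
apply: (max_principle_gronwall (fun (q : 'I_N * 'I_N) s => sqnorm (x q.1 s - x q.2 s))
  (fun q s => 2 * dot (x q.1 s - x q.2 s) (rhs psi tt x q.1 s - rhs psi tt x q.2 s))
  (tt_incr _) _ _ _ _ (i, j) t t_in).
- move=> q; apply: sqnorm_continuous_within => s.
  by apply: cvgB; exact: solution_continuous_within n.*2 _ s.
- move=> q s ns; apply: is_derive_sqnorm.
  by apply: is_deriveB; exact: (x_sol _).2 n.*2 s ns.
- move=> [k l] s ns kl_max /=.
  have s_in : tt n.*2 <= s <= tt n.*2.+1 by case/andP: ns => *; rewrite !ltW.
  apply: (consensus_field_contract N_gt1 (fun i j => alpha tt s * psi (x i s) (x j s)))
    => // [k'|k'|k' l'].
  + by rewrite (alpha_pos_phase tt_incr ns) mul1r; exact: p_le.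
  + by rewrite (alpha_pos_phase tt_incr ns) mul1r; exact: p_le.
  + exact: (kl_max (k', l')).
- move=> [k l] /=; rewrite -enorm_le_sqnorm ?diam_ge0 //; exact: enorm_le_diam.
Qed.

End Solution.

Theorem proposition3p11 (R : realType) (dim : nat)
  (psi : 'rV[R]_dim -> 'rV[R]_dim -> R) (tt : nat -> R)
  (psi_pos : forall y z, 0 < psi y z)
  (psi_bdd : exists M, forall y z, psi y z <= M)
  (psi_cont : continuous (fun p : 'rV[R]_dim * 'rV[R]_dim => psi p.1 p.2))
  (tt0 : tt 0%N = 0)
  (tt_incr : forall m, tt m < tt m.+1)
  (tt_infty : tt @ \oo --> +oo)
  (neg_short : forall p, negtau tt p < ln 2 / supK psi)
  (neg_summable : cvgn (series (fun p =>
      ln (expR (supK psi * negtau tt p) / (2 - expR (supK psi * negtau tt p))))))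
  (R0 : R) (n : nat) :
  exists C : R, 0 < C < 1 /\
    forall (N : nat) (x : 'I_N -> R -> 'rV[R]_dim),
      (2 <= N)%N ->
      (forall i, enorm (x i 0) <= R0) ->
      (let K := supK psi in
       let p0 := psi0 psi (M0 psi tt (fun i => x i 0)) in
       series (fun p => ln (Num.max (1 - expR (- (K * postau tt p)))
                                    (1 - p0 / K * (1 - expR (- (K * postau tt p))))))
         @ \oo --> -oo) ->
      is_solution psi tt x ->
      diam x (tt n.*2.+1) <= C * diam x (tt n.*2).
Proof.
have [c psi_le] := psi_bdd.
have c_gt0 : 0 < c := lt_le_trans (psi_pos 0 0) (psi_le 0 0).
pose a := tt n.*2; pose b := tt n.*2.+1.
pose r := Num.sqrt (R0 ^+ 2 * expR (4 * c * b)).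
have [p p_gt0 p_le] := pos_continuous_ball_lower_bound r psi_pos psi_cont.
exists (expR (- (p * (b - a)))); split.
  by rewrite expR_gt0 expR_lt1 oppr_lt0 mulr_gt0 // subr_gt0; exact: tt_incr.
move=> N x N_ge2 x0_le _ x_sol.
have x0_sq k : sqnorm (x k 0) <= R0 ^+ 2.
  have R0_ge0 : 0 <= R0 := le_trans (enorm_ge0 _) (x0_le k).
  by rewrite -enorm_le_sqnorm ?x0_le.
have x_le i t : a <= t <= b -> enorm (x i t) <= r.
  move=> t_in; rewrite enormE ler_sqrt; last by rewrite mulr_ge0 ?sqr_ge0 ?expR_ge0.
  apply: le_trans
    (solution_sqnorm_le N_ge2 tt0 tt_incr x_sol c _ psi_pos psi_le x0_sq n.*2 i t t_in) _.
  apply: ler_wpM2l; first exact: sqr_ge0.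
  by rewrite ler_expR ler_pM2l ?mulr_gt0 //; case/andP: t_in.
have x_sqnorm_le := solution_diam_contract N_ge2 tt0 tt_incr x_sol n p (ltW p_gt0)
  (fun i k t t_in => p_le _ _ (x_le i t t_in) (x_le k t t_in)).
have C_D_ge0 : 0 <= expR (- (p * (b - a))) * diam x a.
  by rewrite mulr_ge0 ?expR_ge0 ?diam_ge0.
apply: diam_le => // i j; rewrite enorm_le_sqnorm //.
apply: le_trans (x_sqnorm_le i j b _) _; first by rewrite lexx ltW.
rewrite exprMn [expR _ ^+ 2]expr2 -expRD [leRHS]mulrC.
by rewrite (_ : - (p * (b - a)) + - (p * (b - a)) = - (2 * p) * (b - a)) //; ring.
Qed.
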